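(* Let $(\mathcal{C},\mathbb{E},\mathfrak{s})$ be an extriangulated category with enough projective morphisms, and let $\mathbb{F}\subseteq\mathbb{E}$ be an additive subfunctor having enough injective morphisms. Then $\mathrm{Ph}(\mathbb{F})$ is a special precovering ideal.
   Context: An extriangulated category $(\mathcal{C},\mathbb{E},\mathfrak{s})$ (Nakaoka–Palu): additive $\mathcal{C}$, biadditive $\mathbb{E}:\mathcal{C}^{\mathrm{op}}\times\mathcal{C}\to\mathrm{Ab}$, additive realization $\mathfrak{s}$ assigning to each $\delta\in\mathbb{E}(C,A)$ an equivalence class of sequences $A\to B\to C$, forming $\mathbb{E}$-triangles $A\to B\to C\overset{\delta}{\dashrightarrow}$, satisfying (ET1)–(ET4), (ET3)$^{\mathrm{op}}$, (ET4)$^{\mathrm{op}}$. Notation: $a_\star\delta=\mathbb{E}(C,a)(\delta)$, $c^\star\delta=\mathbb{E}(c,A)(\delta)$. A morphism of $\mathbb{E}$-triangles from $A\to B\to C\overset{\delta}{\dashrightarrow}$ to $A'\to B'\to C'\overset{\delta'}{\dashrightarrow}$ is $(a,b,c)$ making the diagram commute with $a_\star\delta=c^\star\delta'$. Additive subfunctor $\mathbb{F}$: subgroups $\mathbb{F}(C,A)\subseteq\mathbb{E}(C,A)$ stable under $a_\star,c^\star$; $\mathbb{F}$-triangles have extension in $\mathbb{F}$. $\mathrm{Ph}(\mathbb{F})$: morphisms $\varphi:X\to C$ with $\varphi^\star\delta\in\mathbb{F}(X,A)$ for all $\delta\in\mathbb{E}(C,A)$ (an ideal). $\mathbb{F}\text{-}\mathrm{inj}$: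 morphisms $i:A\to Y$ with $i_\star\delta=0$ for all $\delta\in\mathbb{F}(C,A)$. $\mathbb{F}$ has enough injective morphisms if every $A$ admits an $\mathbb{F}$-triangle $A\xrightarrow{e}B\to C\overset{\delta}{\dashrightarrow}$ with $e\in\mathbb{F}\text{-}\mathrm{inj}$. $\mathcal{C}$ has enough projective morphisms if every $C$ admits an $\mathbb{E}$-triangle $K\to P\xrightarrow{p}C\overset{\gamma}{\dashrightarrow}$ with $p^\star\delta=0$ for all $\delta\in\mathbb{E}(C,A)$, all $A$. For an ideal $\mathcal{I}$, $\mathcal{I}^{\perp_{\mathbb{E}}}=\{g:A\to Y\mid m^\star g_\star\delta=0\ \forall m\in\mathcal{I},\,m:X\to C,\ \forall\delta\in\mathbb{E}(C,A)\}$. A special $\mathcal{I}$-precover of $C$ is $i:X\to C$ in $\mathcal{I}$ with $\mathbb{E}$-triangles $A\to B\to C\overset{\delta}{\dashrightarrow}$, $A'\to X\xrightarrow{i}C\overset{\delta'}{\dashrightarrow}$ and a morphism $(j,b,\mathrm{id}_C)$ between them with $j\in\mathcal{I}^{\perp_{\mathbb{E}}}$; $\mathcal{I}$ is special precovering if every object has one. *)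

From HB Require Import structures.
From mathcomp Require Import all_boot all_algebra.
Set Implicit Arguments. Unset Strict Implicit. Unset Printing Implicit Defensive.
Import GRing.Theory.
Local Open Scope ring_scope.

Record AddCat := {
  Ob :> Type;
  Hom : Ob -> Ob -> zmodType;
  comp : forall A B D : Ob, Hom B D -> Hom A B -> Hom A D;
  idm : forall A : Ob, Hom A A;
  compA : forall A B D E (h : Hom D E) (g : Hom B D) (f : Hom A B),
      comp h (comp g f) = comp (comp h g) f;
  comp1m : forall A B (f : Hom A B), comp (idm B) f = f;
  compm1 : forall A B (f : Hom A B), comp f (idm A) = f;
  compDl : forall A B D (g g' : Hom B D) (f : Hom A B),
      comp (g + g') f = comp g f + comp g' f;
  compDr : forall A B D (g : Hom B D) (f f' : Hom A B),
      comp g (f + f') = comp g f + comp g f';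
  zero_ob : Ob;
  zero_ob_id : idm zero_ob = 0;
  bip : Ob -> Ob -> Ob;
  bin1 : forall A B, Hom A (bip A B);
  bin2 : forall A B, Hom B (bip A B);
  bpr1 : forall A B, Hom (bip A B) A;
  bpr2 : forall A B, Hom (bip A B) B;
  bip11 : forall A B, comp (bpr1 A B) (bin1 A B) = idm A;
  bip22 : forall A B, comp (bpr2 A B) (bin2 A B) = idm B;
  bip12 : forall A B, comp (bpr1 A B) (bin2 A B) = 0;
  bip21 : forall A B, comp (bpr2 A B) (bin1 A B) = 0;
  bip_id : forall A B,
      comp (bin1 A B) (bpr1 A B) + comp (bin2 A B) (bpr2 A B) = idm (bip A B)
}.
Arguments comp {a A B D}.
Arguments idm {a}.
Arguments bip {a}.
Arguments bin1 {a}. Arguments bin2 {a}. Arguments bpr1 {a}. Arguments bpr2 {a}.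

Notation "g \oc f" := (comp g f) (at level 40, left associativity).

Section CatDefs.
Variable C : AddCat.

Definition is_iso (A B : C) (f : Hom A B) : Prop :=
  exists g : Hom B A, g \oc f = idm A /\ f \oc g = idm B.

Definition hom_sum (A A' B B' : C) (f : Hom A B) (f' : Hom A' B')
  : Hom (bip A A') (bip B B') :=
  bin1 B B' \oc f \oc bpr1 A A' + bin2 B B' \oc f' \oc bpr2 A A'.

Definition MorClass := forall A B : C, Hom A B -> Prop.

Definition is_ideal (I : MorClass) : Prop :=
  (forall A B, I A B 0) /\
  (forall A B (f g : Hom A B), I A B f -> I A B g -> I A B (f + g)) /\
  (forall A B (f : Hom A B), I A B f -> I A B (- f)) /\
  (forall A B D E (h : Hom D E) (f : Hom B D) (g : Hom A B),
      I B D f -> I A E (h \oc f \oc g)).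
End CatDefs.

(*   Ext C A = E(C,A);  pull c d = c^* d;  push a d = a_* d.           *)
(*   realizes d B x y  <->  A -x-> B -y-> C belongs to the class s(d). *)
Record Extri (C : AddCat) := {
  Ext : C -> C -> zmodType;
  pull : forall (Z' Z A : C), Hom Z' Z -> Ext Z A -> Ext Z' A;
  push : forall (Z A A' : C), Hom A A' -> Ext Z A -> Ext Z A';
  pushD : forall Z A A' (a : Hom A A') (d d' : Ext Z A),
      push a (d + d') = push a d + push a d';
  pullD : forall Z' Z A (c : Hom Z' Z) (d d' : Ext Z A),
      pull c (d + d') = pull c d + pull c d';
  pushDm : forall Z A A' (a a' : Hom A A') (d : Ext Z A),
      push (a + a') d = push a d + push a' d;
  pullDm : forall Z' Z A (c c' : Hom Z' Z) (d : Ext Z A),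
      pull (c + c') d = pull c d + pull c' d;
  push1 : forall Z A (d : Ext Z A), push (idm A) d = d;
  pull1 : forall Z A (d : Ext Z A), pull (idm Z) d = d;
  pushM : forall Z A A' A'' (a : Hom A A') (a' : Hom A' A'') (d : Ext Z A),
      push (a' \oc a) d = push a' (push a d);
  pullM : forall Z'' Z' Z A (c' : Hom Z'' Z') (c : Hom Z' Z) (d : Ext Z A),
      pull (c \oc c') d = pull c' (pull c d);
  pull_push : forall Z' Z A A' (c : Hom Z' Z) (a : Hom A A') (d : Ext Z A),
      pull c (push a d) = push a (pull c d);
  (* realization s: each s(d) is a nonempty equivalence class of sequences *)
  realizes : forall (Z A : C), Ext Z A -> forall B : C, Hom A B -> Hom B Z -> Prop;
  realizes_ex : forall Z A (d : Ext Z A), exists B x y, @realizes Z A d B x y;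
  realizes_class : forall Z A (d : Ext Z A) B (x : Hom A B) (y : Hom B Z)
      B' (x' : Hom A B') (y' : Hom B' Z),
      realizes d x y ->
      (realizes d x' y' <->
       exists b : Hom B B', is_iso b /\ b \oc x = x' /\ y' \oc b = y);
  realizes_mor : forall Z A (d : Ext Z A) B (x : Hom A B) (y : Hom B Z)
      Z' A' (d' : Ext Z' A') B' (x' : Hom A' B') (y' : Hom B' Z')
      (a : Hom A A') (c : Hom Z Z'),
      realizes d x y -> realizes d' x' y' -> push a d = pull c d' ->
      exists b : Hom B B', b \oc x = x' \oc a /\ y' \oc b = c \oc y;
  realizes0 : forall Z A : C, realizes (0 : Ext Z A) (bin1 A Z) (bpr2 A Z);
  realizes_sum : forall Z A (d : Ext Z A) B (x : Hom A B) (y : Hom B Z)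
      Z' A' (d' : Ext Z' A') B' (x' : Hom A' B') (y' : Hom B' Z'),
      realizes d x y -> realizes d' x' y' ->
      realizes (push (bin1 A A') (pull (bpr1 Z Z') d)
                + push (bin2 A A') (pull (bpr2 Z Z') d'))
               (hom_sum x x') (hom_sum y y');
  ET3 : forall Z A (d : Ext Z A) B (x : Hom A B) (y : Hom B Z)
      Z' A' (d' : Ext Z' A') B' (x' : Hom A' B') (y' : Hom B' Z')
      (a : Hom A A') (b : Hom B B'),
      realizes d x y -> realizes d' x' y' -> b \oc x = x' \oc a ->
      exists c : Hom Z Z', c \oc y = y' \oc b /\ push a d = pull c d';
  ET3op : forall Z A (d : Ext Z A) B (x : Hom A B) (y : Hom B Z)
      Z' A' (d' : Ext Z' A') B' (x' : Hom A' B') (y' : Hom B' Z')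
      (b : Hom B B') (c : Hom Z Z'),
      realizes d x y -> realizes d' x' y' -> c \oc y = y' \oc b ->
      exists a : Hom A A', b \oc x = x' \oc a /\ push a d = pull c d';
  ET4 : forall (A B D Cc F : C) (d : Ext D A) (f : Hom A B) (f' : Hom B D)
      (d' : Ext F B) (g : Hom B Cc) (g' : Hom Cc F),
      realizes d f f' -> realizes d' g g' ->
      exists (E : C) (h' : Hom Cc E) (dd : Hom D E) (e : Hom E F)
             (d'' : Ext E A),
        realizes d'' (g \oc f) h' /\
        realizes (push f' d') dd e /\
        dd \oc f' = h' \oc g /\ e \oc h' = g' /\
        pull dd d'' = d /\ push f d'' = pull e d';
  ET4op : forall (D A B F Cc : C) (d : Ext B D) (f' : Hom D A) (f : Hom A B)
      (d' : Ext Cc F) (g' : Hom F B) (g : Hom B Cc),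
      realizes d f' f -> realizes d' g' g ->
      exists (E : C) (h' : Hom E A) (dd : Hom D E) (e : Hom E F)
             (d'' : Ext Cc E),
        realizes d'' h' (g \oc f) /\
        realizes (pull g' d) dd e /\
        h' \oc dd = f' /\ f \oc h' = g' \oc e /\
        push e d'' = d' /\ push dd d = pull g d''
}.
Arguments Ext {C}. Arguments pull {C e Z' Z A}. Arguments push {C e Z A A'}.
Arguments realizes {C e Z A} d {B}.

Section ExtriDefs.
Variables (C : AddCat) (X : Extri C).

Definition tri_mor (Z A B : C) (d : Ext X Z A) (x : Hom A B) (y : Hom B Z)
    (Z' A' B' : C) (d' : Ext X Z' A') (x' : Hom A' B') (y' : Hom B' Z')
    (a : Hom A A') (b : Hom B B') (c : Hom Z Z') : Prop :=
  b \oc x = x' \oc a /\ y' \oc b = c \oc y /\ push a d = pull c d'.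

Record AddSubfunctor := {
  Fsub : forall Z A : C, Ext X Z A -> Prop;
  Fsub0 : forall Z A, Fsub (0 : Ext X Z A);
  FsubD : forall Z A (d d' : Ext X Z A), Fsub d -> Fsub d' -> Fsub (d + d');
  FsubN : forall Z A (d : Ext X Z A), Fsub d -> Fsub (- d);
  Fsub_push : forall Z A A' (a : Hom A A') (d : Ext X Z A), Fsub d -> Fsub (push a d);
  Fsub_pull : forall Z' Z A (c : Hom Z' Z) (d : Ext X Z A), Fsub d -> Fsub (pull c d)
}.

Variable F : AddSubfunctor.

Definition Ph : MorClass C :=
  fun (Y Z : C) (phi : Hom Y Z) =>
    forall (A : C) (d : Ext X Z A), Fsub F (pull phi d).

Definition Finj (A Y : C) (i : Hom A Y) : Prop :=
  forall (Z : C) (d : Ext X Z A), Fsub F d -> push i d = 0.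

Definition enough_inj_morphisms : Prop :=
  forall A : C, exists (B Z : C) (e : Hom A B) (y : Hom B Z) (d : Ext X Z A),
    Fsub F d /\ realizes d e y /\ Finj e.

End ExtriDefs.

Section ExtriDefs2.
Variables (C : AddCat) (X : Extri C).

Definition enough_proj_morphisms : Prop :=
  forall Z : C, exists (K P : C) (k : Hom K P) (p : Hom P Z) (g : Ext X Z K),
    realizes g k p /\
    (forall (A : C) (d : Ext X Z A), pull p d = 0).

Definition perpE (I : MorClass C) : MorClass C :=
  fun (A Y : C) (g : Hom A Y) =>
    forall (W Z : C) (m : Hom W Z) (d : Ext X Z A), I W Z m -> pull m (push g d) = 0.

Definition special_precover (I : MorClass C) (Z W : C) (i : Hom W Z) : Prop :=
  I W Z i /\
  exists (A B A' : C) (x : Hom A B) (y : Hom B Z) (d : Ext X Z A)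
         (x' : Hom A' W) (d' : Ext X Z A') (j : Hom A A') (b : Hom B W),
    realizes d x y /\ realizes d' x' i /\
    tri_mor d x y d' x' i j b (idm Z) /\ perpE I j.

Definition special_precovering (I : MorClass C) : Prop :=
  forall Z : C, exists (W : C) (i : Hom W Z), special_precover I i.
End ExtriDefs2.

(* Take a projective morphism [p : P -> Z], realized by [K -k-> P -p-> Z] with
   extension [g], and an [F]-injective morphism [e : K -> I] sitting in an
   [F]-triangle [K -e-> I -f-> C'].  Realize [e_* g] as [I -> W -i-> Z]; then
   [(e, b, 1_Z)] is a morphism of triangles, and [e] lies in [Ph(F)^perp]
   because [F]-injectivity kills every [m^* e_* d] with [m] a phantom.
   Finally [i] is a phantom: every [d] in [E(Z,A)] is [c_* g] since [p^* d = 0],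
   so [i^* d = c_* (i^* g)], and [i^* g] is killed by [e_*], hence is pulled
   back from the [F]-extension of the triangle of [e]. *)
From mathcomp Require Import all_boot all_algebra.
Import GRing.Theory.
Local Open Scope ring_scope.
Set Implicit Arguments. Unset Strict Implicit.

Lemma morph_add0 (U V : zmodType) (f : U -> V) :
  {morph f : x y / x + y} -> f 0 = 0.
Proof. by move=> fD; apply: (addrI (f 0)); rewrite -fD !addr0. Qed.

Lemma morph_addN (U V : zmodType) (f : U -> V) :
  {morph f : x y / x + y} -> {morph f : x / - x}.
Proof.
move=> fD x; apply: (addrI (f x)).
by rewrite -fD !subrr (morph_add0 fD).
Qed.

Section ExtriangulatedFacts.
Variables (C : AddCat) (X : Extri C).

Lemma push0 (Z A A' : C) (a : Hom A A') : push a (0 : Ext X Z A) = 0.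
Proof. exact/morph_add0/pushD. Qed.

Lemma pull0 (Z' Z A : C) (c : Hom Z' Z) : pull c (0 : Ext X Z A) = 0.
Proof. exact/morph_add0/pullD. Qed.

Lemma pull0m (Z' Z A : C) (d : Ext X Z A) : pull (0 : Hom Z' Z) d = 0.
Proof. exact: (morph_add0 (f := pull^~ d)) (fun c c' => pullDm c c' d). Qed.

Lemma pullNm (Z' Z A : C) (c : Hom Z' Z) (d : Ext X Z A) :
  pull (- c) d = - pull c d.
Proof. exact: (morph_addN (f := pull^~ d) (fun c c' => pullDm c c' d)). Qed.

(* Compare with the split triangle [A -> A (+) B -> B] realizing [0]. *)
Lemma realizes_pull_eq0 (Z A B : C) (d : Ext X Z A) (x : Hom A B) (y : Hom B Z) :
  realizes d x y -> pull y d = 0.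
Proof.
move=> Rd.
have [a [_ <-]] := ET3op (realizes0 X B A) Rd (b := bpr2 A B) (c := y) erefl.
exact: push0.
Qed.

Lemma pull_eq0_push (Z K P A : C) (g : Ext X Z K) (k : Hom K P) (p : Hom P Z)
    (d : Ext X Z A) :
  realizes g k p -> pull p d = 0 -> exists c : Hom K A, d = push c g.
Proof.
move=> Rg pd0.
have [M [u [v Rd]]] := realizes_ex d.
have [b [_ vb]] := realizes_mor (realizes0 X P A) Rd (a := idm A) (c := p)
  (ltac:(by rewrite push1 pd0)).
have lift_p : idm Z \oc p = v \oc (b \oc bin2 A P).
  by rewrite comp1m compA vb -compA bip22 compm1.
have [c [_ cg]] := ET3op Rg Rd lift_p.
by exists c; rewrite cg pull1.
Qed.

Lemma push_eq0_pull (Z K I W : C) (d : Ext X Z K) (e : Hom K I) (f : Hom I Z)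
    (t : Ext X W K) :
  realizes d e f -> push e t = 0 -> exists h : Hom W Z, t = pull h d.
Proof.
move=> Rd et0.
have [N [u [v Rt]]] := realizes_ex t.
have [b [bu _]] := realizes_mor Rt (realizes0 X W I) (a := e) (c := idm W)
  (ltac:(by rewrite pull0 et0)).
have extend_e : (bpr1 I W \oc b) \oc u = e \oc idm K.
  by rewrite -compA bu compA bip11 comp1m compm1.
have [h [_ eh]] := ET3 Rt Rd extend_e.
by exists h; rewrite -eh push1.
Qed.

Lemma pushout_tri_mor (Z K P I W : C) (g : Ext X Z K) (k : Hom K P)
    (p : Hom P Z) (e : Hom K I) (x : Hom I W) (i : Hom W Z) :
  realizes g k p -> realizes (push e g) x i ->
  exists b : Hom P W, tri_mor g k p (push e g) x i e b (idm Z).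
Proof.
move=> Rg Ri.
have [b [bk ib]] := realizes_mor Rg Ri (a := e) (c := idm Z) (esym (pull1 _)).
by exists b; rewrite /tri_mor pull1.
Qed.

Section Subfunctor.
Variable F : AddSubfunctor X.

Lemma Ph_ideal : is_ideal (Ph F).
Proof.
split; first by move=> A B Z d; rewrite pull0m; apply: Fsub0.
split; first by move=> A B f g Ff Fg Z d; rewrite pullDm; apply: FsubD.
split; first by move=> A B f Ff Z d; rewrite pullNm; apply: FsubN.
by move=> A B D E h f g Ff Z d; rewrite !pullM; apply/Fsub_pull/Ff.
Qed.

Lemma Finj_perpE (A Y : C) (e : Hom A Y) : Finj F e -> perpE X (Ph F) e.
Proof. by move=> Fe W Z m d Pm; rewrite pull_push; apply/Fe/Pm. Qed.

Lemma Fsub_push_eq0 (Z K I W : C) (d : Ext X Z K) (e : Hom K I) (f : Hom I Z)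
    (t : Ext X W K) :
  Fsub F d -> realizes d e f -> push e t = 0 -> Fsub F t.
Proof. by move=> Fd Rd /(push_eq0_pull Rd) [h ->]; apply: Fsub_pull. Qed.

Lemma pushout_Ph (Z K P I C' W : C) (g : Ext X Z K) (k : Hom K P)
    (p : Hom P Z) (d : Ext X C' K) (e : Hom K I) (f : Hom I C')
    (x : Hom I W) (i : Hom W Z) :
  realizes g k p -> (forall A (t : Ext X Z A), pull p t = 0) ->
  Fsub F d -> realizes d e f -> realizes (push e g) x i -> Ph F i.
Proof.
move=> Rg p_proj Fd Rd Ri A t.
have [c ->] := pull_eq0_push Rg (p_proj A t).
rewrite pull_push; apply: Fsub_push.
apply: (Fsub_push_eq0 Fd Rd).
by rewrite -pull_push (realizes_pull_eq0 Ri).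
Qed.

End Subfunctor.
End ExtriangulatedFacts.

Theorem theorem4p2 (C : AddCat) (X : Extri C) (F : AddSubfunctor X) :
  enough_proj_morphisms X -> enough_inj_morphisms F ->
  is_ideal (Ph F) /\ special_precovering X (Ph F).
Proof.
move=> enough_proj enough_inj; split; first exact: Ph_ideal.
move=> Z.
have [K [P [k [p [g [Rg p_proj]]]]]] := enough_proj Z.
have [I [C' [e [f [d [Fd [Rd Fe]]]]]]] := enough_inj K.
have [W [x [i Ri]]] := realizes_ex (push e g).
have [b mor] := pushout_tri_mor Rg Ri.
exists W, i; split; first exact: pushout_Ph Rg p_proj Fd Rd Ri.
exists K, P, I, k, p, g, x, (push e g), e, b.
by do 3!(split; first by []); exact: Finj_perpE.
Qed.
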